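(* Let $(N,v)$ be a TU game with $\Pi(v)=\emptyset$, and let $\delta>0$ be such that every value $v(S)$, $S\subseteq N$, is an integer multiple of $\delta$. Following the Coalition Proposal algorithm (described in the context) for $(N,v)$ with step $\delta$, starting from any environment state $(\mathbf{a},\mathcal{C})\in\Omega(v)$ whose aspirations are integer multiples of $\delta$, the environment state never converges (it never reaches a state from which it remains unchanged forever).
   Context: A TU game is a pair $(N,v)$ with $N=\{1,\dots,n\}$ and $v:2^N\to\mathbb{R}$, $v(\emptyset)=0$. $\mathcal{P}(N)$ denotes the set of partitions of $N$. A core solution is a pair $(\mathbf{x},\rho)$ with $\mathbf{x}\in\mathbb{R}^n$, $\rho\in\mathcal{P}(N)$, such that $\sum_{i\in S}x_i\ge v(S)$ for all $S\subseteq N$ and $\sum_{i\in S}x_i=v(S)$ for all $S\in\rho$; $\Pi(v)$ is the set of core solutions. Coalition Proposal algorithm with step $\delta$: each player $i$ holds an aspiration $a_i$ and a coalition state $C_i\subseteq N$. In each iteration: a player $i\in N$ is activated at random; $i$ chooses at random a set $S\subseteq N\setminus\{i\}$ and proposes $J=S\cup\{i\}$ (random choices independent across iterations, every player and every subset having positive probability). If $\sum_{j\in J}a_j+\delta\le v(J)$ (success): $a_i\leftarrow a_i+\delta$; then for every $j\in J$ and every $k\in C_j$ with $k\neq j$, set $C_k\leftarrow\emptyset$; then set $C_j\leftarrow J$ for all $j\in J$. Otherwise (failure): if $C_i=\emptyset$, set $a_i\leftarrow\max(v(\{i\}),a_i-\delta)$. Finally, if $a_i=v(\{i\})$ and $C_i=\emptyset$,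 set $C_i\leftarrow\{i\}$. The environment state is $(\mathbf{a},\mathcal{C})$ with $\mathbf{a}=(a_1,\dots,a_n)$ and $\mathcal{C}=\{C_i:i\in N\}$ the set of (nonempty) formed coalitions. A feasible environment state is a pair $(\mathbf{a},\mathcal{C})$ with $\mathbf{a}\in\mathbb{R}^n$ and $\mathcal{C}$ a set of pairwise disjoint subsets of $N$ such that $a_i\ge v(\{i\})$ for all $i\in N$ and $\sum_{i\in S}a_i\le v(S)$ for all $S\in\mathcal{C}$. $\Omega(v)$ is the set of feasible environment states. *)

From HB Require Import structures.
From mathcomp Require Import all_boot all_order all_algebra.
From mathcomp Require Import reals.
Set Implicit Arguments. Unset Strict Implicit. Unset Printing Implicit Defensive.
Import Order.TTheory GRing.Theory Num.Theory.
Local Open Scope ring_scope.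

Section CoalitionProposal.
Variables (R : realType) (n : nat).
Implicit Types (v : {set 'I_n} -> R).

Definition core_solution v (x : 'I_n -> R) (rho : {set {set 'I_n}}) : Prop :=
  partition rho [set: 'I_n] /\
  (forall S : {set 'I_n}, v S <= \sum_(i in S) x i) /\
  (forall S : {set 'I_n}, S \in rho -> \sum_(i in S) x i = v S).

Definition core_empty v : Prop :=
  ~ (exists (x : 'I_n -> R) (rho : {set {set 'I_n}}), core_solution v x rho).

Definition multiple_of (d r : R) : Prop := exists k : int, r = k%:~R * d.

Definition feasible_env v (a : {ffun 'I_n -> R}) (Cs : {set {set 'I_n}}) : Prop :=
  (forall S T, S \in Cs -> T \in Cs -> S != T -> [disjoint S & T]) /\
  (forall i, v [set i] <= a i) /\
  (forall S, S \in Cs -> \sum_(i in S) a i <= v S).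

(* Internal state: aspirations and per-player coalition states C_i *)
Definition istate := ({ffun 'I_n -> R} * {ffun 'I_n -> {set 'I_n}})%type.

(* Player states induced by a set of pairwise disjoint coalitions:
   C_i = the coalition of Cs containing i, or the empty set. *)
Definition init_C (Cs : {set {set 'I_n}}) : {ffun 'I_n -> {set 'I_n}} :=
  [ffun i => pblock Cs i].

Definition env (st : istate) : ({ffun 'I_n -> R} * {set {set 'I_n}})%type :=
  (st.1, [set st.2 i | i : 'I_n] :\ set0).

(* One iteration: player i activated, proposes J = S U {i} (i \notin S). *)
Definition step v (d : R) (st : istate) (i : 'I_n) (S : {set 'I_n}) : istate :=
  let a := st.1 in let C := st.2 in
  let J := i |: S in
  let '(a', C') :=
    if \sum_(j in J) a j + d <= v J then
      let a1 := [ffun k => if k == i then a k + d else a k] in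
      let C1 := [ffun k => if [exists j in J, (k \in C j) && (k != j)]
                           then set0 else C k] in
      let C2 := [ffun k => if k \in J then J else C1 k] in
      (a1, C2)
    else
      let a1 := [ffun k => if (k == i) && (C i == set0)
                           then Num.max (v [set i]) (a i - d) else a k] in
      (a1, C) in
  let C'' := [ffun k => if (k == i) && (a' i == v [set i]) && (C' i == set0)
                        then [set i] else C' k] in
  (a', C'').

(* States reachable by some sequence of iterations (any activated player and
   any proposal, each of which has positive probability). *)
Inductive reachable v (d : R) (st0 : istate) : istate -> Prop :=
| reach_refl : reachable v d st0 st0
| reach_step st (i : 'I_n) (S : {set 'I_n}) : reachable v d st0 st -> i \notin S ->
    reachable v d st0 (step v d st i S).

End CoalitionProposal.

From HB Require Import structures.
From mathcomp Require Import all_boot all_order all_algebra.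
From mathcomp Require Import reals lra.
From Stdlib Require Import Classical.
Set Implicit Arguments. Unset Strict Implicit. Unset Printing Implicit Defensive.
Import Order.TTheory GRing.Theory Num.Theory.
Local Open Scope ring_scope.

(* Every reachable state satisfies an invariant: aspirations are individually
   rational multiples of [d], and each formed coalition contains the players
   pointing to it and is feasible for the aspirations.  If a state never
   changed, no proposal could succeed (it raises an aspiration) and no player
   could be unattached (a failed proposal would lower her aspiration or, once
   it equals [v {i}], form the coalition [{i}]).  So every proposal [J] fails,
   [v J < a(J) + d], hence [v J <= a(J)] since both sides are multiples of [d],
   and the aspirations with the formed coalitions would be a core solution. *)

Section Multiples.
Variables (R : realType) (d : R).

Lemma multiple_of0 : multiple_of d 0.
Proof. by exists 0; rewrite mul0r. Qed.

Lemma multiple_of_self : multiple_of d d.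
Proof. by exists 1; rewrite mul1r. Qed.

Lemma multiple_ofD x y : multiple_of d x -> multiple_of d y -> multiple_of d (x + y).
Proof. by move=> [k ->] [l ->]; exists (k + l); rewrite intrD mulrDl. Qed.

Lemma multiple_ofB x y : multiple_of d x -> multiple_of d y -> multiple_of d (x - y).
Proof. by move=> [k ->] [l ->]; exists (k - l); rewrite intrB mulrBl. Qed.

Lemma multiple_of_max x y :
  multiple_of d x -> multiple_of d y -> multiple_of d (Num.max x y).
Proof. by move=> mx my; rewrite maxEle; case: ifP. Qed.

Lemma multiple_of_sum (I : finType) (P : pred I) (F : I -> R) :
  (forall j, multiple_of d (F j)) -> multiple_of d (\sum_(j | P j) F j).
Proof.
move=> mF; apply: (big_ind (multiple_of d)) => //.
- exact: multiple_of0.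
- exact: multiple_ofD.
Qed.

Lemma multiple_of_ltD_le x y : 0 < d ->
  multiple_of d x -> multiple_of d y -> y < x + d -> y <= x.
Proof.
move=> d_gt0 [k ->] [l ->].
rewrite -[X in _ < _ + X]mul1r -mulrDl -[1]/(1%:~R) -intrD.
by rewrite ltr_pM2r // ler_pM2r // ltr_int ler_int ltzD1.
Qed.

End Multiples.

Section Step.
Variables (R : realType) (n : nat) (v : {set 'I_n} -> R) (d : R).
Variables (a : {ffun 'I_n -> R}) (C : {ffun 'I_n -> {set 'I_n}}).
Variables (i : 'I_n) (S : {set 'I_n}).

Lemma step_success : \sum_(j in i |: S) a j + d <= v (i |: S) ->
  step v d (a, C) i S =
  ([ffun k => if k == i then a k + d else a k],
   [ffun k => if k \in i |: S then i |: S
              else if [exists j in i |: S, (k \in C j) && (k != j)] then set0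
              else C k]).
Proof.
move=> success; rewrite /step /= success; congr pair; apply/ffunP => k.
have /negbTE J_neq0 : i |: S != set0 by apply/set0Pn; exists i; rewrite setU11.
by rewrite !ffunE setU11 J_neq0 andbF.
Qed.

Lemma step_failure : ~~ (\sum_(j in i |: S) a j + d <= v (i |: S)) ->
  step v d (a, C) i S =
  ([ffun k => if (k == i) && (C i == set0) then Num.max (v [set i]) (a i - d)
              else a k],
   [ffun k => if (k == i) && (C i == set0)
                 && (Num.max (v [set i]) (a i - d) == v [set i])
              then [set i] else C k]).
Proof.
move=> /negbTE failure; rewrite /step /= failure; congr pair; apply/ffunP => k.
by rewrite !ffunE eqxx; case: (C i == set0); rewrite ?andbF ?andbT.
Qed.

End Step.

Section Invariant.
Variables (R : realType) (n : nat) (v : {set 'I_n} -> R) (d : R).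

Record wf_state (a : {ffun 'I_n -> R}) (C : {ffun 'I_n -> {set 'I_n}}) : Prop :=
  WfState {
  wf_rational : forall k, v [set k] <= a k;
  wf_multiple : forall k, multiple_of d (a k);
  wf_member : forall k, C k != set0 -> k \in C k;
  wf_closed : forall k j, j \in C k -> C j = C k;
  wf_feasible : forall k, C k != set0 -> \sum_(j in C k) a j <= v (C k) }.

Lemma wf_dissolvedE a C (J : {set 'I_n}) k : wf_state a C -> k \notin J ->
  [exists j in J, (k \in C j) && (k != j)] = (C k :&: J != set0).
Proof.
move=> wf kJ; apply/existsP/set0Pn => [[j /and3P[jJ kCj _]] | [j]].
  exists j; rewrite inE jJ andbT (wf_closed wf kCj) (wf_member wf) //.
  by apply/set0Pn; exists k.
rewrite inE => /andP[jCk jJ]; exists j; rewrite jJ (wf_closed wf jCk) (wf_member wf) /=.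
  by apply: contraNneq kJ => ->.
by apply/set0Pn; exists j.
Qed.

Hypotheses (d_gt0 : 0 < d) (v_multiple : forall S, multiple_of d (v S)).

Lemma wf_step_success a C i S : wf_state a C ->
  \sum_(j in i |: S) a j + d <= v (i |: S) ->
  wf_state (step v d (a, C) i S).1 (step v d (a, C) i S).2.
Proof.
move=> wf success; rewrite step_success //=; set J := i |: S.
have iJ : i \in J by rewrite setU11.
split=> [k|k|k|k j|k]; rewrite ?ffunE.
- case: eqP => [->|_]; last exact: wf_rational wf k.
  by rewrite (le_trans (wf_rational wf i)) // lerDl ltW.
- case: eqP => _; last exact: wf_multiple wf k.
  exact: multiple_ofD (wf_multiple wf k) (multiple_of_self d).
- case: ifPn => // kJ; rewrite (wf_dissolvedE wf kJ).
  by case: ifP => _; [rewrite eqxx | exact: wf_member wf k].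
- case: ifPn => [_ jJ|kJ]; first by rewrite jJ.
  rewrite (wf_dissolvedE wf kJ); case: ifPn => [_|CkJ0 jCk]; first by rewrite inE.
  have jJ : j \notin J.
    by apply: contraNN CkJ0 => jJ; apply/set0Pn; exists j; rewrite inE jCk.
  by rewrite (negbTE jJ) (wf_dissolvedE wf jJ) (wf_closed wf jCk) (negbTE CkJ0).
- case: ifPn => [_ _|kJ].
    rewrite (bigD1 i) //= ffunE eqxx.
    under eq_bigr => j /andP[_ /negbTE ji] do rewrite ffunE ji.
    by move: success; rewrite (bigD1 i) //=; lra.
  rewrite (wf_dissolvedE wf kJ); case: ifPn => [_|CkJ0 Ck0]; first by rewrite eqxx.
  rewrite (eq_bigr (fun j => a j)) ?(wf_feasible wf) // => j jCk.
  rewrite ffunE; case: eqP => // eji; case/negP: CkJ0.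
  by apply/set0Pn; exists i; rewrite inE iJ andbT -eji.
Qed.

Lemma wf_step_failure a C i S : wf_state a C ->
  ~~ (\sum_(j in i |: S) a j + d <= v (i |: S)) ->
  wf_state (step v d (a, C) i S).1 (step v d (a, C) i S).2.
Proof.
move=> wf failure; rewrite step_failure //=.
set ai' := Num.max (v [set i]) (a i - d).
have ai'_le : ai' <= a i by rewrite ge_max (wf_rational wf) /= lerBlDr lerDl ltW.
split=> [k|k|k|k j|k]; rewrite ?ffunE.
- case: ifP => [/andP[/eqP -> _]|_]; last exact: wf_rational wf k.
  by rewrite le_max lexx.
- case: ifP => _; last exact: wf_multiple wf k.
  apply: multiple_of_max (v_multiple _) _.
  exact: multiple_ofB (wf_multiple wf i) (multiple_of_self d).
- case: ifP => [/andP[/andP[/eqP -> _] _] _|_]; first by rewrite set11.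
  exact: wf_member wf k.
- case: ifP => [/andP[/andP[_ Ci0] ai'E]|_].
    by rewrite inE => /eqP ->; rewrite eqxx Ci0 ai'E.
  move=> jCk; rewrite -(wf_closed wf jCk); case: ifP => // /andP[/andP[/eqP eji Ci0] _].
  by have := jCk; rewrite -(wf_closed wf jCk) eji (eqP Ci0) inE.
- case: ifP => [/andP[/andP[_ Ci0] /eqP ai'E] _|_ Ck0].
    by rewrite big_set1 ffunE eqxx Ci0 ai'E.
  apply: le_trans (wf_feasible wf Ck0); apply: ler_sum => j _.
  by rewrite ffunE; case: ifP => // /andP[/eqP -> _].
Qed.

Lemma wf_step a C i S : wf_state a C ->
  wf_state (step v d (a, C) i S).1 (step v d (a, C) i S).2.
Proof.
move=> wf; case: (boolP (\sum_(j in i |: S) a j + d <= v (i |: S))).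
  exact: wf_step_success.
exact: wf_step_failure.
Qed.

Lemma wf_init a0 Cs : feasible_env v a0 Cs -> (forall i, multiple_of d (a0 i)) ->
  wf_state a0 (init_C Cs).
Proof.
move=> [disjCs [rational feasible]] a0_multiple.
have trivCs : trivIset Cs by apply/trivIsetP.
have pblock_block k : pblock Cs k != set0 -> pblock Cs k \in Cs /\ k \in pblock Cs k.
  by rewrite /pblock; case: pickP => [B /andP[BCs kB] _ | _] //=; rewrite eqxx.
split=> // [k|k j|k]; rewrite !ffunE.
- by case/pblock_block.
- exact: same_pblock.
- by case/pblock_block => /feasible.
Qed.

Lemma wf_reachable a0 Cs st :
  feasible_env v a0 Cs -> (forall i, multiple_of d (a0 i)) ->
  reachable v d (a0, init_C Cs) st -> wf_state st.1 st.2.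
Proof.
move=> feas a0_multiple; elim=> [|[a C] i S _ wf _]; first exact: wf_init.
exact: wf_step.
Qed.

End Invariant.

Lemma closed_blocks_partition (T : finType) (C : T -> {set T}) :
  (forall k, k \in C k) -> (forall k j, j \in C k -> C j = C k) ->
  partition [set C k | k : T] [set: T].
Proof.
move=> memC closedC; apply/and3P; split.
- apply/eqP/setP => k; rewrite inE; apply/bigcupP; exists (C k) => //.
  exact: imset_f.
- apply/trivIsetP => _ _ /imsetP[k _ ->] /imsetP[l _ ->] neq.
  rewrite -setI_eq0; apply: contraNT neq => /set0Pn[j]; rewrite inE => /andP[jk jl].
  by rewrite -(closedC _ _ jk) (closedC _ _ jl).
- by apply/imsetP => -[k _ Ck0]; have := memC k; rewrite -Ck0 inE.
Qed.

Definition stuck (R : realType) (n : nat) (v : {set 'I_n} -> R) (d : R)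
    (st : istate R n) : Prop :=
  forall i (S : {set 'I_n}), i \notin S -> env (step v d st i S) = env st.

Section StuckState.
Variables (R : realType) (n : nat) (v : {set 'I_n} -> R) (d : R).
Variables (a : {ffun 'I_n -> R}) (C : {ffun 'I_n -> {set 'I_n}}).
Hypotheses (v0 : v set0 = 0) (d_gt0 : 0 < d).
Hypothesis v_multiple : forall S, multiple_of d (v S).
Hypotheses (wf : wf_state v d a C) (stuck_aC : stuck v d (a, C)).

Lemma stuck_failure i (S : {set 'I_n}) :
  i \notin S -> v (i |: S) < \sum_(j in i |: S) a j + d.
Proof.
move=> iS; rewrite ltNge; apply/negP => success.
have := stuck_aC iS; rewrite step_success // => -[/ffunP/(_ i) + _].
rewrite ffunE eqxx -[RHS]addr0 => /addrI d0.
by move: d_gt0; rewrite d0 ltxx.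
Qed.

Lemma stuck_matched i : C i != set0.
Proof.
apply/negP => /eqP Ci0.
have i0 : i \notin (set0 : {set 'I_n}) by rewrite inE.
have := stuck_aC i0; rewrite step_failure -?ltNge ?stuck_failure // /env /= Ci0 eqxx.
move=> [/ffunP/(_ i) + coalitions]; rewrite ffunE !eqxx /= => ai'E.
have ai_single : Num.max (v [set i]) (a i - d) = v [set i].
  move: ai'E; rewrite maxEle; case: ifP => // _ /eqP.
  by rewrite -[X in _ == X]addr0 (inj_eq (addrI _)) oppr_eq0 gt_eqF.
have : [set i] \in [set C k | k : 'I_n] :\ set0.
  rewrite -coalitions !inE; apply/andP; split.
    by apply/set0Pn; exists i; rewrite inE.
  by apply/imsetP; exists i => //; rewrite ffunE eqxx ai_single eqxx.
rewrite !inE => /andP[_ /imsetP[k _ Ck]].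
have iCk : i \in C k by rewrite -Ck set11.
by have := wf_closed wf iCk; rewrite Ci0 -Ck => /setP/(_ i); rewrite !inE eqxx.
Qed.

Lemma stuck_rational S : v S <= \sum_(j in S) a j.
Proof.
have [->|[i iS]] := set_0Vmem S; first by rewrite big_set0 v0.
have := stuck_failure (negbT (setD11 i S)); rewrite setD1K //.
apply: multiple_of_ltD_le d_gt0 _ (v_multiple S).
exact: multiple_of_sum (wf_multiple wf).
Qed.

Lemma stuck_core_solution : core_solution v a [set C k | k : 'I_n].
Proof.
have memC k : k \in C k := wf_member wf (stuck_matched k).
split; first exact: closed_blocks_partition memC (wf_closed wf).
split=> [|_ /imsetP[k _ ->]]; first exact: stuck_rational.
by apply/eqP; rewrite eq_le stuck_rational andbT (wf_feasible wf (stuck_matched k)).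
Qed.

End StuckState.

Theorem proposition4 (R : realType) (n : nat) (v : {set 'I_n} -> R) (d : R) :
  v set0 = 0 ->
  core_empty v ->
  0 < d ->
  (forall S : {set 'I_n}, multiple_of d (v S)) ->
  forall (a0 : {ffun 'I_n -> R}) (Cs : {set {set 'I_n}}),
    feasible_env v a0 Cs ->
    (forall i, multiple_of d (a0 i)) ->
    forall st : istate R n, reachable v d (a0, init_C Cs) st ->
      exists (i : 'I_n) (S : {set 'I_n}),
        i \notin S /\ env (step v d st i S) <> env st.
Proof.
move=> v0 core0 d_gt0 v_multiple a0 Cs feas a0_multiple st reach.
have wf_st := wf_reachable d_gt0 v_multiple feas a0_multiple reach.
apply: NNPP => not_moving.
have stuck_st : stuck v d st.
  by move=> i S iS; apply: NNPP => moved; apply: not_moving; exists i, S.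
apply: core0; case: st wf_st stuck_st {reach not_moving} => a C /= wf_aC stuck_aC.
exists a, [set C k | k : 'I_n].
exact: stuck_core_solution v0 d_gt0 v_multiple wf_aC stuck_aC.
Qed.
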